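(* For a finite rooted tree $T$, define for each vertex $v$ the polynomial $C_v(x)\in\mathbb{Z}[x]$ inductively by $C_v(x)=x+2$ if $v$ is a leaf, and $C_v(x)=x^{n_v}+2x\prod_{i=1}^{\deg(v)}C_{v_i}(x)+2$ if $v$ is internal, where $n_v$ is the number of vertices of the subtree $T_v$ rooted at $v$ and $v_1,\dots,v_{\deg(v)}$ are the children of $v$; set $C_T(x)=C_r(x)$ where $r$ is the root of $T$. Then $C_T$ is a complete invariant for rooted trees: for any two finite rooted trees $T$ and $T'$, $C_T(x)=C_{T'}(x)$ if and only if $T$ and $T'$ are isomorphic as rooted trees.
   Context: An isomorphism of rooted trees is a graph isomorphism mapping root to root. $T_v$ consists of $v$ and all its descendants. *)

From mathcomp Require Import all_boot all_order all_algebra.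
Set Implicit Arguments. Unset Strict Implicit. Unset Printing Implicit Defensive.
Import GRing.Theory.
Local Open Scope ring_scope.

(* Finite rooted trees: a root with a (finite) list of child subtrees.
   The order of the list is irrelevant for the notions below. *)
Inductive rtree : Type := Node of seq rtree.

Fixpoint rsize (t : rtree) : nat :=
  let: Node ts := t in
  (1 + (fix sz (l : seq rtree) : nat :=
          match l with [::] => 0 | c :: l' => rsize c + sz l' end) ts)%N.

Fixpoint Cpoly (t : rtree) : {poly int} :=
  match t with
  | Node [::] => 'X + 2%:P
  | Node ts =>
      'X^(rsize t)
      + 2%:P * 'X * (fix pr (l : seq rtree) : {poly int} :=
                        match l with [::] => 1 | c :: l' => Cpoly c * pr l' end) ts
      + 2%:P
  end.

(* Vertices of t are addressed by paths from the root: [::] is the root,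
   and i :: p is the vertex at address p in the i-th child subtree. *)
Fixpoint valid_pos (t : rtree) (p : seq nat) : bool :=
  match p with
  | [::] => true
  | i :: p' => let: Node ts := t in
               (i < size ts)%N && valid_pos (nth (Node [::]) ts i) p'
  end.

Definition adj (p q : seq nat) : Prop :=
  (exists i, q = rcons p i) \/ (exists i, p = rcons q i).

Definition rtree_iso (t u : rtree) : Prop :=
  exists (f g : seq nat -> seq nat),
    (forall p, valid_pos t p -> valid_pos u (f p) /\ g (f p) = p) /\
    (forall q, valid_pos u q -> valid_pos t (g q) /\ f (g q) = q) /\
    f [::] = [::] /\
    (forall p q, valid_pos t p -> valid_pos t q -> (adj p q <-> adj (f p) (f q))).

(* Modulo 2, C_T is x^n with n = |T|; moreover C_T has degree n and constant
   term 2, so it is Eisenstein at 2 and hence irreducible over Q.  If the root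
   has children T_1, ..., T_k, then C_T determines n, hence
   C_{T_1} ... C_{T_k} = (C_T - x^n - 2) / 2x, and by unique factorisation in
   Q[x] (the factors being normalised by their constant term 2) the multiset
   {C_{T_1}, ..., C_{T_k}}.  Conversely, a rooted-tree isomorphism maps the
   children of the root bijectively onto the children of the root and
   restricts to isomorphisms of the child subtrees.  So, by induction, both
   C_T = C_T' and T ~ T' amount to a matching of the children of the two roots
   by pairs with equal invariants, resp. isomorphic subtrees. *)

From mathcomp Require Import all_boot all_order all_algebra.
From mathcomp Require Import zify ring.
Set Implicit Arguments. Unset Strict Implicit. Unset Printing Implicit Defensive.
Import GRing.Theory.
Local Open Scope ring_scope.

Section IrreducibleFactorization.

Variable F : fieldType.
Implicit Types (p q : {poly F}) (s : seq {poly F}).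

Lemma irredp_dvdp_prod p s :
  irreducible_poly p -> p %| \prod_(q <- s) q -> has (dvdp p) s.
Proof.
move=> p_irr; elim: s => [|q s IHs].
  by rewrite big_nil dvdp1 => /eqP p1; case: p_irr; rewrite p1.
rewrite big_cons /=; have [//|pNq] := boolP (p %| q).
by rewrite Gauss_dvdpr ?irreducible_poly_coprime.
Qed.

Lemma eqp_coef0_eq p q : p %= q -> p`_0 = q`_0 -> p`_0 != 0 -> p = q.
Proof.
move=> /eqpP[[c d] /= /andP[c0 d0] cpdq] pq0 p00.
have cd : c = d by apply: (mulIf p00); rewrite -coefZ cpdq coefZ pq0.
by apply: (scalerI c0); rewrite cpdq cd.
Qed.

Lemma perm_eq_prod_irredp s1 s2 :
  {in s1 ++ s2, forall p, irreducible_poly p} ->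
  {in s1 ++ s2 &, forall p q, p %= q -> p = q} ->
  \prod_(p <- s1) p = \prod_(p <- s2) p -> perm_eq s1 s2.
Proof.
elim: s1 s2 => [|p s1 IHs] s2 irr eqpE.
  case: s2 irr eqpE => [//|q s2] irr _; rewrite big_nil big_cons => prodE.
  have : q %| 1 by rewrite prodE dvdp_mulr.
  by rewrite dvdp1; case: (irr q (mem_head _ _)) => /gtn_eqF ->.
rewrite big_cons => prodE.
have p_irr := irr p (mem_head _ _).
have /hasP[q qs2 pq] : has (dvdp p) s2.
  by apply: irredp_dvdp_prod => //; rewrite -prodE dvdp_mulr.
have qs : q \in (p :: s1) ++ s2 by rewrite mem_cat qs2 orbT.
have pqE : p = q.
  apply: eqpE; rewrite ?mem_head //.
  by apply: (irr q qs).2 pq; case: p_irr => /gtn_eqF ->.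
subst q; have s2E := perm_to_rem qs2.
rewrite (perm_big _ s2E) big_cons in prodE.
apply: (@perm_trans _ (p :: rem p s2)); last by rewrite perm_sym.
rewrite perm_cons.
have sub : {subset s1 ++ rem p s2 <= (p :: s1) ++ s2}.
  move=> r; rewrite !mem_cat inE => /orP[->|/mem_rem ->]; rewrite ?orbT //.
apply: IHs (mulfI (irredp_neq0 p_irr) prodE).
  by move=> r /sub; apply: irr.
by move=> r r' /sub rs /sub r's; apply: eqpE.
Qed.

End IrreducibleFactorization.

Lemma map_mem_range (T : Type) (A : eqType) (f : T -> A) s y :
  y \in map f s -> exists x, y = f x.
Proof. by elim: s => //= x s IHs; rewrite inE => /orP[/eqP->|/IHs]; [exists x|]. Qed.

Lemma nat_choice (T : Type) (x0 : T) (P : nat -> T -> Prop) n :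
  (forall i, (i < n)%N -> exists x, P i x) -> exists F, forall i, (i < n)%N -> P i (F i).
Proof.
elim: n => [|n IHn] exP; first by exists (fun _ => x0).
have [F FP] := IHn (fun i lti => exP i (ltnW lti)); have [x Px] := exP n (ltnSn n).
exists (fun i => if i == n then x else F i) => i; rewrite ltnS leq_eqVlt.
by case: eqP => [-> _ | _ /FP].
Qed.

Lemma perm_iota_nth_lt Is n i :
  perm_eq Is (iota 0 n) -> (i < size Is)%N -> (nth 0 Is i < n)%N.
Proof.
by move=> permIs /(mem_nth 0); rewrite (perm_mem permIs) mem_iota.
Qed.

Lemma perm_iota_nthK Is n i :
  perm_eq Is (iota 0 n) -> (i < n)%N -> (nth 0 Is i < n)%N /\ index (nth 0 Is i) Is = i.
Proof.
move=> permIs lti; have sizeIs : size Is = n by rewrite (perm_size permIs) size_iota.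
split; first by apply: perm_iota_nth_lt permIs _; rewrite sizeIs.
by rewrite index_uniq ?sizeIs // (perm_uniq permIs) iota_uniq.
Qed.

Lemma perm_iota_indexK Is n j :
  perm_eq Is (iota 0 n) -> (j < n)%N -> (index j Is < n)%N /\ nth 0 Is (index j Is) = j.
Proof.
move=> permIs ltj; have sizeIs : size Is = n by rewrite (perm_size permIs) size_iota.
have jIs : j \in Is by rewrite (perm_mem permIs) mem_iota.
by rewrite -sizeIs index_mem nth_index.
Qed.

Section PermMatch.

Variables (T : Type) (x0 : T).

Definition perm_match (R : T -> T -> Prop) (s1 s2 : seq T) :=
  size s1 = size s2 /\
  exists2 Is, perm_eq Is (iota 0 (size s2)) &
    forall i, (i < size s1)%N -> R (nth x0 s1 i) (nth x0 s2 (nth 0 Is i)).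

Lemma eq_perm_match (R1 R2 : T -> T -> Prop) s1 s2 :
    (forall i y, (i < size s1)%N -> R1 (nth x0 s1 i) y <-> R2 (nth x0 s1 i) y) ->
  perm_match R1 s1 s2 <-> perm_match R2 s1 s2.
Proof.
by move=> R12; split=> -[sizeE [Is permIs R_Is]]; split=> //; exists Is => // i lti;
  apply/R12/R_Is.
Qed.

Lemma perm_map_matchP (A : eqType) (F : T -> A) s1 s2 :
  perm_eq (map F s1) (map F s2) <-> perm_match (fun x y => F x = F y) s1 s2.
Proof.
split=> [/(perm_iotaP (F x0))[Is] | [sizeE [Is permIs FE]]].
  rewrite size_map => permIs s1E.
  have sizeIs : size s1 = size Is by rewrite -(size_map F s1) s1E size_map.
  split; first by rewrite sizeIs (perm_size permIs) size_iota.
  exists Is => // i lti; rewrite -!(nth_map x0 (F x0)) ?s1E ?(nth_map 0) -?sizeIs //.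
  by apply: perm_iota_nth_lt permIs _; rewrite -sizeIs.
apply/(perm_iotaP (F x0)); exists Is; first by rewrite size_map.
have sizeIs : size Is = size s1 by rewrite (perm_size permIs) size_iota.
apply: (eq_from_nth (x0 := F x0)) => [|i]; rewrite !size_map // => lti.
rewrite (nth_map x0) // (nth_map 0) ?sizeIs // (nth_map x0) ?FE //.
by apply: perm_iota_nth_lt permIs _; rewrite sizeIs.
Qed.

End PermMatch.

Local Notation child ts i := (nth (Node [::]) ts i).

Lemma rsizeE ts : rsize (Node ts) = (sumn (map rsize ts)).+1.
Proof. by rewrite /= add1n; congr _.+1; elim: ts => //= c ts ->. Qed.

Lemma rsize_gt0 t : (0 < rsize t)%N.
Proof. by case: t => ts; rewrite rsizeE. Qed.

Lemma rsize_child ts i : (i < size ts)%N -> (rsize (child ts i) < rsize (Node ts))%N.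
Proof.
rewrite rsizeE ltnS; elim: ts i => [|c ts IHts] [|i] //= lti.
  by rewrite leq_addr.
by rewrite (leq_trans (IHts i lti)) ?leq_addl.
Qed.

Lemma rtree_child_ind (P : rtree -> Prop) :
  (forall ts, (forall i, (i < size ts)%N -> P (child ts i)) -> P (Node ts)) ->
  forall t, P t.
Proof.
move=> IH t; have [n] := ubnP (rsize t); elim: n t => // n IHn [ts] ltn.
by apply: IH => i /rsize_child lti; apply: IHn; apply: leq_trans lti _.
Qed.

Lemma CpolyE ts : Cpoly (Node ts) = if ts is [::] then 'X + 2%:P else
  'X^(rsize (Node ts)) + 2%:P * 'X * \prod_(c <- ts) Cpoly c + 2%:P.
Proof.
case: ts => // c ts; rewrite [Cpoly _]/= big_cons; congr (_ + _ * (_ * _) + _)%R.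
by elim: ts => [|d s /= ->]; rewrite ?big_nil ?big_cons.
Qed.

Lemma Cpoly_mod2 t : exists r, Cpoly t = 'X^(rsize t) + 2%:P * (r * 'X + 1).
Proof.
case: t => -[|c ts]; first by exists 0; rewrite mul0r add0r mulr1.
by exists (\prod_(d <- c :: ts) Cpoly d); rewrite CpolyE; ring.
Qed.

Lemma coef_Cpoly t i : exists r : int, (Cpoly t)`_i = (i == rsize t)%:R + 2 * r.
Proof.
have [r ->] := Cpoly_mod2 t.
by exists (r * 'X + 1)`_i; rewrite coefD coefXn coefCM.
Qed.

Lemma coef0_Cpoly t : (Cpoly t)`_0 = 2.
Proof.
have [r ->] := Cpoly_mod2 t.
by rewrite coefD coefXn coefCM coefD coefMX coef1 eq_sym gtn_eqF ?rsize_gt0.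
Qed.

Lemma Cpoly_neq0 t : Cpoly t != 0.
Proof. by apply: contra_eq_neq (coef0_Cpoly t) => ->; rewrite coef0. Qed.

Lemma size_prod_Cpoly s :
    (forall i, (i < size s)%N -> size (Cpoly (child s i)) = (rsize (child s i)).+1) ->
  size (\prod_(c <- s) Cpoly c) = (sumn (map rsize s)).+1.
Proof.
move=> sizes; rewrite -(big_map Cpoly predT id) size_prod_seq; last first.
  by move=> q; apply/allP: q; rewrite all_map (eq_all Cpoly_neq0) all_predT.
have -> : \sum_(q <- map Cpoly s) size q = sumn (map (size \o Cpoly) s).
  by rewrite sumnE !big_map.
have -> : map (size \o Cpoly) s = map (succn \o rsize) s.
  apply: (eq_from_nth (x0 := 0%N)) => [|i]; rewrite !size_map // => lti.
  by rewrite !(nth_map (Node [::])) //= sizes.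
by rewrite size_map; elim: s {sizes} => //= d s; lia.
Qed.

Lemma size_Cpoly t : size (Cpoly t) = (rsize t).+1.
Proof.
elim/rtree_child_ind: t => ts IH; apply/anti_leq/andP; split; last first.
  have [r] := coef_Cpoly (Node ts) (rsize (Node ts)); rewrite eqxx => lead.
  by rewrite ltnNge; apply/negP => /(nth_default 0); rewrite lead; lia.
rewrite CpolyE; case: ts IH => [|c ts] IH; first by rewrite size_XaddC.
have sizeP := size_prod_Cpoly IH; rewrite -rsizeE in sizeP.
set n := rsize _ in sizeP *; set P := \prod_(d <- _) _ in sizeP *.
have size2XP : size (2%:P * 'X * P) = n.+1.
  rewrite -mulrA mul_polyC size_scale // mulrC size_mulX ?sizeP //.
  by rewrite -size_poly_gt0 sizeP /n rsize_gt0.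
apply: leq_trans (size_polyD _ _) _.
rewrite geq_max (leq_trans (size_polyC_leq1 _)) // andbT.
by apply: leq_trans (size_polyD _ _) _; rewrite geq_max size_polyXn size2XP leqnn.
Qed.

Lemma irreducible_Cpoly t : irreducible_poly (Cpoly t).
Proof.
apply: (@eisenstein_crit 2) => //.
- by rewrite size_Cpoly eqSS -lt0n rsize_gt0.
- rewrite lead_coefE size_Cpoly /=.
  by have [r ->] := coef_Cpoly t (rsize t); rewrite eqxx dvdzE; lia.
- by rewrite coef0_Cpoly.
rewrite size_Cpoly => i lti; have [r ->] := coef_Cpoly t i.
by rewrite (ltn_eqF lti) add0r dvdz_mulr.
Qed.

Lemma perm_prod_Cpoly s1 s2 :
    \prod_(c <- s1) Cpoly c = \prod_(c <- s2) Cpoly c ->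
  perm_eq (map Cpoly s1) (map Cpoly s2).
Proof.
pose toQ := map_poly (intr : int -> rat).
have toQ_inj : injective toQ by apply: map_inj_poly => //; apply: intr_inj.
move=> prodE; apply: (perm_map_inj toQ_inj); rewrite -!map_comp.
apply: perm_eq_prod_irredp.
- move=> q; rewrite -map_cat => /map_mem_range[c ->].
  exact/irreducible_rat_int/irreducible_Cpoly.
- move=> p q; rewrite -map_cat => /map_mem_range[c ->] /map_mem_range[d ->] cd.
  by apply: eqp_coef0_eq cd _ _; rewrite /= !coef_map /= !coef0_Cpoly.
by rewrite !big_map -!rmorph_prod prodE.
Qed.

Lemma Cpoly_NodeP ts us :
  Cpoly (Node ts) = Cpoly (Node us) <-> perm_eq (map Cpoly ts) (map Cpoly us).
Proof.
split=> [CE | permC].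
  have rsE : rsize (Node ts) = rsize (Node us).
    by apply: succn_inj; rewrite -!size_Cpoly CE.
  case: ts us rsE CE => [|c ts] [|d us] rsE CE //.
  - by move: rsE; rewrite !rsizeE /=; have := rsize_gt0 d; lia.
  - by move: rsE; rewrite !rsizeE /=; have := rsize_gt0 c; lia.
  have nz2X : 2%:P * 'X != 0 :> {poly int} by rewrite mulf_neq0 ?polyX_eq0 ?polyC_eq0.
  by move: CE; rewrite !CpolyE rsE => /addIr/addrI/(mulfI nz2X)/perm_prod_Cpoly.
have rsE : rsize (Node ts) = rsize (Node us).
  have rsizes s : map rsize s = map (fun p : {poly int} => (size p).-1) (map Cpoly s).
    by rewrite -map_comp; apply: eq_map => c; rewrite /= size_Cpoly.
  by rewrite !rsizeE !rsizes (perm_sumn (perm_map _ permC)).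
have := perm_size permC; rewrite !CpolyE rsE !size_map.
case: ts us permC {rsE} => [|c ts] [|d us] permC // _.
by rewrite -!(big_map Cpoly predT id) (perm_big _ permC).
Qed.

Lemma adj_sym p q : adj p q <-> adj q p.
Proof. by split=> -[]; [right | left | right | left]. Qed.

Lemma adj_rcons p k : adj p (rcons p k).
Proof. by left; exists k. Qed.

Lemma adj_cons i j p q : adj (i :: p) (j :: q) <-> i = j /\ adj p q.
Proof.
split; last by case=> -> [] [k ->]; [left | right]; exists k.
by case=> -[k]; rewrite rcons_cons => -[-> ->]; split=> //; [left | right]; exists k.
Qed.

Lemma adj_nil_cons j q : adj [::] (j :: q) <-> q = [::].
Proof.
split=> [[] [k] /= kE | ->]; [by case: kE | by [] | by left; exists j].
Qed.

Lemma valid_rcons t p k : valid_pos t (rcons p k) -> valid_pos t p.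
Proof. by elim: p t => [|i p IHp] [ts] //= /andP[-> /IHp]. Qed.

Lemma valid_single (vs : seq rtree) i : valid_pos (Node vs) [:: i] = (i < size vs)%N.
Proof. by rewrite /= andbT. Qed.

Definition rtree_isom (t u : rtree) (f g : seq nat -> seq nat) : Prop :=
  (forall p, valid_pos t p -> valid_pos u (f p) /\ g (f p) = p) /\
  (forall q, valid_pos u q -> valid_pos t (g q) /\ f (g q) = q) /\
  f [::] = [::] /\
  (forall p q, valid_pos t p -> valid_pos t q -> (adj p q <-> adj (f p) (f q))).

Definition isom_index (f : seq nat -> seq nat) (i : nat) : nat := head 0%N (f [:: i]).

Section RtreeIsom.

Variables (t u : rtree) (f g : seq nat -> seq nat).
Hypothesis iso : rtree_isom t u f g.

Lemma rtree_isomV : rtree_isom u t g f.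
Proof.
have [fK [gK [f0 fadj]]] := iso; split=> //; split=> //; split.
  by rewrite -f0 (fK [::] isT).2.
move=> p q vp vq; have [vgp gpK] := gK p vp; have [vgq gqK] := gK q vq.
by rewrite (fadj _ _ vgp vgq) gpK gqK.
Qed.

Lemma isom_nil p : valid_pos t p -> f p = [::] <-> p = [::].
Proof.
have [fK [_ [f0 _]]] := iso; move=> vp; split=> [fp0 | ->] //.
by rewrite -(fK p vp).2 fp0 -f0 (fK [::] isT).2.
Qed.

(* f (rcons p k) is a neighbour of f p; it cannot be the parent of f p, which is
   already the image of the parent of p. *)
Lemma isom_rcons p k :
  valid_pos t (rcons p k) -> exists k', f (rcons p k) = rcons (f p) k'.
Proof.
have [fK [_ [f0 fadj]]] := iso.
elim/last_ind: p k => [|p j IHp] k v; have vp := valid_rcons v;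
  (case: ((fadj _ _ vp v).1 (adj_rcons _ _)) => -[k' fpE]; first by exists k').
  by move/(congr1 size): fpE; rewrite f0 size_rcons => /eqP.
have [k2 fpjE] := IHp j vp; rewrite fpjE in fpE; case/rcons_inj: fpE => fpE _.
have : p = rcons (rcons p j) k.
  by rewrite -[LHS](fK _ (valid_rcons vp)).2 fpE (fK _ v).2.
by move/(congr1 size); rewrite !size_rcons; lia.
Qed.

Lemma isom_single i : valid_pos t [:: i] -> f [:: i] = [:: isom_index f i].
Proof.
have [_ [_ [f0 _]]] := iso; move=> v; have [k fiE] := isom_rcons (p := [::]) v.
by rewrite /isom_index fiE f0.
Qed.

Lemma isom_cons i p :
  valid_pos t (i :: p) -> f (i :: p) = isom_index f i :: behead (f (i :: p)).
Proof.
elim/last_ind: p => [|p k IHp] v; first by rewrite isom_single.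
move: v; rewrite -rcons_cons => v; have [k' ->] := isom_rcons v.
by rewrite (IHp (valid_rcons v)).
Qed.

End RtreeIsom.

Section NodeIsom.

Variables (ts us : seq rtree) (f g : seq nat -> seq nat).
Hypothesis iso : rtree_isom (Node ts) (Node us) f g.

Lemma isom_index_lt i : (i < size ts)%N -> (isom_index f i < size us)%N.
Proof.
rewrite -valid_single => vi; have [fK _] := iso.
by have [] := fK _ vi; rewrite (isom_single iso vi) valid_single.
Qed.

Lemma isom_indexK i : (i < size ts)%N -> isom_index g (isom_index f i) = i.
Proof.
rewrite -valid_single => vi; have [fK _] := iso.
by rewrite /isom_index -(isom_single iso vi) (fK _ vi).2.
Qed.

Lemma uniq_isom_index : uniq (map (isom_index f) (iota 0 (size ts))).
Proof.
rewrite map_inj_in_uniq ?iota_uniq // => i j; rewrite !mem_iota /= => lti ltj fij.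
by rewrite -(isom_indexK lti) fij isom_indexK.
Qed.

Lemma isom_index_sub :
  {subset map (isom_index f) (iota 0 (size ts)) <= iota 0 (size us)}.
Proof. by move=> k /mapP[i]; rewrite !mem_iota /= => /isom_index_lt lt ->. Qed.

Lemma isom_size_leq : (size ts <= size us)%N.
Proof.
by have := uniq_leq_size uniq_isom_index isom_index_sub; rewrite size_map !size_iota.
Qed.

Lemma isom_child i : (i < size ts)%N ->
  rtree_isom (child ts i) (child us (isom_index f i))
    (fun p => behead (f (i :: p))) (fun q => behead (g (isom_index f i :: q))).
Proof.
move=> lti; have [fK [gK [f0 fadj]]] := iso; set j := isom_index f i.
have vi p : valid_pos (child ts i) p -> valid_pos (Node ts) (i :: p) by rewrite /= lti.
have vj q : valid_pos (child us j) q -> valid_pos (Node us) (j :: q).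
  by rewrite /= isom_index_lt.
have fE p : valid_pos (child ts i) p -> f (i :: p) = j :: behead (f (i :: p)).
  by move/vi/(isom_cons iso).
have gE q : valid_pos (child us j) q -> g (j :: q) = i :: behead (g (j :: q)).
  by move/vj/(isom_cons (rtree_isomV iso)); rewrite isom_indexK.
split; [|split; [|split]].
- move=> p vp; have [] := fK _ (vi p vp); rewrite (fE p vp) /= => /andP[_ ->].
  by rewrite -(fE p vp) => ->.
- move=> q vq; have [] := gK _ (vj q vq); rewrite (gE q vq) /= => /andP[_ ->].
  by rewrite -(gE q vq) => ->.
- by rewrite (isom_single iso) ?valid_single.
move=> p q vp vq; have [ipq fipq] := fadj _ _ (vi p vp) (vi q vq); split=> [pq | fpq].
  have /ipq : adj (i :: p) (i :: q) by apply/adj_cons.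
  by rewrite (fE p vp) (fE q vq) => /adj_cons[].
have /fipq : adj (f (i :: p)) (f (i :: q)).
  by rewrite (fE p vp) (fE q vq); apply/adj_cons.
by case/adj_cons.
Qed.

End NodeIsom.

Lemma isom_perm_match ts us f g :
  rtree_isom (Node ts) (Node us) f g -> perm_match (Node [::]) rtree_iso ts us.
Proof.
move=> iso; have sizeE : size ts = size us.
  by apply/anti_leq; rewrite (isom_size_leq iso) (isom_size_leq (rtree_isomV iso)).
split=> //; exists (map (isom_index f) (iota 0 (size ts))).
  apply: uniq_perm (uniq_isom_index iso) (iota_uniq _ _) _.
  apply: (uniq_min_size (uniq_isom_index iso) (isom_index_sub iso) _).2.
  by rewrite size_map !size_iota sizeE.
move=> i lti; rewrite (nth_map 0) ?size_iota // nth_iota //.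
exists (fun p => behead (f (i :: p))), (fun q => behead (g (isom_index f i :: q))).
exact: isom_child.
Qed.

Lemma isom_Node ts us (s t : nat -> nat) (F G : nat -> seq nat -> seq nat) :
    (forall i, (i < size ts)%N -> (s i < size us)%N /\ t (s i) = i) ->
    (forall j, (j < size us)%N -> (t j < size ts)%N /\ s (t j) = j) ->
    (forall i, (i < size ts)%N -> rtree_isom (child ts i) (child us (s i)) (F i) (G i)) ->
  rtree_isom (Node ts) (Node us)
    (fun p => if p is i :: p' then s i :: F i p' else [::])
    (fun q => if q is j :: q' then t j :: G (t j) q' else [::]).
Proof.
move=> sK tK isoF; split; [|split; [|split=> //]].
- case=> [|i p] //= /andP[lti vp]; have [-> ->] := sK i lti.
  by have [-> ->] := (isoF i lti).1 p vp.
- case=> [|j q] //= /andP[ltj vq]; have [ltt stj] := tK j ltj.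
  have [_ [gK _]] := isoF _ ltt; rewrite stj in gK.
  by have [-> ->] := gK q vq; rewrite ltt stj.
case=> [|i p] [|j q] /=.
- by split.
- move=> _ /andP[ltj vq].
  by split=> /adj_nil_cons qE; apply/adj_nil_cons; apply/(isom_nil (isoF j ltj) vq).
- move=> /andP[lti vp] _.
  split=> /adj_sym/adj_nil_cons pE; apply/adj_sym/adj_nil_cons.
    by apply/(isom_nil (isoF i lti) vp).
  by apply/(isom_nil (isoF i lti) vp).
move=> /andP[lti vp] /andP[ltj vq]; split=> /adj_cons[ij pq]; apply/adj_cons.
  by subst j; split=> //; apply/((isoF i lti).2.2.2 p q vp vq).
have {}ij : i = j by rewrite -(sK i lti).2 ij (sK j ltj).2.
by subst j; split=> //; apply/((isoF i lti).2.2.2 p q vp vq).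
Qed.

Lemma perm_match_iso ts us :
  perm_match (Node [::]) rtree_iso ts us -> rtree_iso (Node ts) (Node us).
Proof.
move=> [sizeE [Is permIs isoIs]].
have : forall i, (i < size ts)%N -> exists fg : (seq nat -> seq nat) * (seq nat -> seq nat),
    rtree_isom (child ts i) (child us (nth 0 Is i)) fg.1 fg.2.
  by move=> i /isoIs[f [g fg]]; exists (f, g).
case/(nat_choice (id, id)) => FG FGiso; do 2 eexists.
apply: (isom_Node (s := nth 0 Is) (t := index^~ Is)) FGiso.
  by move=> i; rewrite sizeE; apply: perm_iota_nthK.
by move=> j; rewrite sizeE; apply: perm_iota_indexK.
Qed.

Lemma rtree_iso_NodeP ts us :
  rtree_iso (Node ts) (Node us) <-> perm_match (Node [::]) rtree_iso ts us.
Proof. by split=> [[f [g /isom_perm_match]] | /perm_match_iso]. Qed.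

Theorem mainTheorem3 (T T' : rtree) : Cpoly T = Cpoly T' <-> rtree_iso T T'.
Proof.
elim/rtree_child_ind: T T' => ts IH [us].
apply: (iff_trans (Cpoly_NodeP ts us)).
apply: (iff_trans (perm_map_matchP (Node [::]) Cpoly ts us)).
apply: (iff_trans _ (iff_sym (rtree_iso_NodeP ts us))).
by apply: eq_perm_match => i u /IH.
Qed.
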